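(* Let $\nabla$ be an ES basic fusion operator with representing basic assignment $\Phi\mapsto\succeq_\Phi$. The following are equivalent: (i) $\nabla$ satisfies (ESF-D); (ii) for every society $N$ there is $d_N\in N$ such that for every $N$-profile $\Phi$ and every $E\in\mathcal E$ with $|[\![B(E)]\!]|\le 2$, $B(\nabla(\Phi,E))\vdash B(\nabla(E_{d_N},E))$; (iii) for every society $N$ there is $d_N\in N$ such that for every $N$-profile $\Phi$ and all interpretations $w,w'$, if $w\succ_{E_{d_N}}w'$ then $w\succ_\Phi w'$.
   Context: Setting: epistemic space $(\mathcal E,B,\mathcal L_{\mathcal P})$ ($\mathcal E$ nonempty, $B:\mathcal E\to$ propositional formulas over finite $\mathcal P$, image modulo equivalence exactly the consistent formulas; $\mathcal W_{\mathcal P}$ valuations, $[\![\phi]\!]$ models); agents: well-ordered set $\mathcal S$; society: nonempty finite $N\subseteq\mathcal S$; $N$-profile $\Phi:N\to\mathcal E$, $E_i=\Phi(i)$, identified with $E_i$ if $N=\{i\}$; profiles on $\{i_1<\dots<i_n\}$, $\{j_1<\dots<j_m\}$ equivalent if $n=m$ and entries coincide position-wise. ES basic fusion operator: a map $\nabla(\Phi,E)\in\mathcal E$ with (ESF1) $B(\nabla(\Phi,E))\vdash B(E)$; (ESF2) equivalent profiles and $B(E)\equiv B(E')$ give equivalent $B(\nabla)$; (ESF3) if $B(E)\equiv B(E')\wedge B(E'')$ then $B(\nabla(\Phi,E'))\wedge B(E'')\vdash B(\nabla(\Phi,E))$; (ESF4) if moreover $B(\nabla(\Phi,E'))\wedge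 B(E'')\nvdash\bot$ then $B(\nabla(\Phi,E))\vdash B(\nabla(\Phi,E'))\wedge B(E'')$. Representing basic assignment: the unique $\Phi\mapsto\succeq_\Phi$ (total preorders on $\mathcal W_{\mathcal P}$, $\succ$ strict part, equal on equivalent profiles) with $[\![B(\nabla(\Phi,E))]\!]=\max([\![B(E)]\!],\succeq_\Phi)$, $\max(C,\succeq)=\{c\in C:c\succeq x\ \forall x\in C\}$. (ESF-D): for every society $N$ there exists $d_N\in N$ such that for every $N$-profile $\Phi$ and every $E$, $B(\nabla(\Phi,E))\vdash B(\nabla(E_{d_N},E))$. *)

From HB Require Import structures.
From mathcomp Require Import all_boot all_order.
Set Implicit Arguments. Unset Strict Implicit. Unset Printing Implicit Defensive.
Import Order.TTheory.

Inductive form (P : Type) : Type :=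
  | FVar of P
  | FTop
  | FBot
  | FNeg of form P
  | FAnd of form P & form P
  | FOr of form P & form P
  | FImp of form P & form P.
Arguments FTop {P}. Arguments FBot {P}.

Definition valuation (P : finType) := {ffun P -> bool}.

Fixpoint eval (P : finType) (w : valuation P) (f : form P) : bool :=
  match f with
  | FVar p => w p
  | FTop => true
  | FBot => false
  | FNeg g => ~~ eval w g
  | FAnd g h => eval w g && eval w h
  | FOr g h => eval w g || eval w h
  | FImp g h => eval w g ==> eval w h
  end.

Definition models (P : finType) (f : form P) : {set valuation P} :=
  [set w | eval w f].

(* phi |- psi  (classical propositional consequence, via soundness/completeness) *)
Definition entails (P : finType) (f g : form P) : Prop := models f \subset models g.
Definition fequiv (P : finType) (f g : form P) : Prop := models f = models g.
Definition consistent (P : finType) (f : form P) : Prop := ~ entails f FBot.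

Definition epistemic_space (P : finType) (E : Type) (B : E -> form P) : Prop :=
  inhabited E /\
  (forall e, consistent (B e)) /\
  (forall f : form P, consistent f -> exists e, fequiv (B e) f).

(* A society N is a nonempty finite subset of S, represented as the strictly
   increasing list of its elements.  An N-profile is represented by a function
   Phi : S -> E, of which only the values on N matter (E_i = Phi i). *)
Definition well_ordered (d : Order.disp_t) (S : orderType d) : Prop :=
  well_founded (fun x y : S => (x < y)%O).

Definition society (d : Order.disp_t) (S : orderType d) (N : seq S) : Prop :=
  sorted (fun x y : S => (x < y)%O) N /\ N <> [::].

Definition prof_equiv (d : Order.disp_t) (S : orderType d) (E : Type)
  (N1 : seq S) (Phi1 : S -> E) (N2 : seq S) (Phi2 : S -> E) : Prop :=
  map Phi1 N1 = map Phi2 N2.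

Definition ES_basic_fusion (P : finType) (E : Type) (B : E -> form P)
  (d : Order.disp_t) (S : orderType d)
  (nabla : seq S -> (S -> E) -> E -> E) : Prop :=
  (forall N Phi e, society N -> entails (B (nabla N Phi e)) (B e)) /\
  (forall N1 Phi1 N2 Phi2 e e', society N1 -> society N2 ->
     prof_equiv N1 Phi1 N2 Phi2 -> fequiv (B e) (B e') ->
     fequiv (B (nabla N1 Phi1 e)) (B (nabla N2 Phi2 e'))) /\
  (forall N Phi e e' e'', society N ->
     fequiv (B e) (FAnd (B e') (B e'')) ->
     entails (FAnd (B (nabla N Phi e')) (B e'')) (B (nabla N Phi e))) /\
  (forall N Phi e e' e'', society N ->
     fequiv (B e) (FAnd (B e') (B e'')) ->
     consistent (FAnd (B (nabla N Phi e')) (B e'')) ->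
     entails (B (nabla N Phi e)) (FAnd (B (nabla N Phi e')) (B e''))).

Definition total_preorder (T : Type) (r : rel T) : Prop :=
  transitive r /\ total r.

Definition strict (T : Type) (r : rel T) : rel T := fun x y => r x y && ~~ r y x.

Definition maxset_rel (T : finType) (C : {set T}) (r : rel T) : {set T} :=
  [set c in C | [forall x in C, r c x]].

Definition represents (P : finType) (E : Type) (B : E -> form P)
  (d : Order.disp_t) (S : orderType d)
  (nabla : seq S -> (S -> E) -> E -> E)
  (pre : seq S -> (S -> E) -> rel (valuation P)) : Prop :=
  (forall N Phi, society N -> total_preorder (pre N Phi)) /\
  (forall N1 Phi1 N2 Phi2, society N1 -> society N2 ->
     prof_equiv N1 Phi1 N2 Phi2 -> pre N1 Phi1 = pre N2 Phi2) /\
  (forall N Phi e, society N ->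
     models (B (nabla N Phi e)) = maxset_rel (models (B e)) (pre N Phi)).

(* ---------- (ESF-D) ----------  The single-agent profile E_{d_N} is the
   profile on the society [:: dN] with entry Phi dN. *)
Definition ESF_D (P : finType) (E : Type) (B : E -> form P)
  (d : Order.disp_t) (S : orderType d)
  (nabla : seq S -> (S -> E) -> E -> E) : Prop :=
  forall N, society N -> exists2 dN, dN \in N &
    forall (Phi : S -> E) (e : E),
      entails (B (nabla N Phi e)) (B (nabla [:: dN] Phi e)).

Definition cond_ii (P : finType) (E : Type) (B : E -> form P)
  (d : Order.disp_t) (S : orderType d)
  (nabla : seq S -> (S -> E) -> E -> E) : Prop :=
  forall N, society N -> exists2 dN, dN \in N &
    forall (Phi : S -> E) (e : E), #|models (B e)| <= 2 ->
      entails (B (nabla N Phi e)) (B (nabla [:: dN] Phi e)).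

Definition cond_iii (P : finType) (E : Type)
  (d : Order.disp_t) (S : orderType d)
  (pre : seq S -> (S -> E) -> rel (valuation P)) : Prop :=
  forall N, society N -> exists2 dN, dN \in N &
    forall (Phi : S -> E) (w w' : valuation P),
      strict (pre [:: dN] Phi) w w' -> strict (pre N Phi) w w'.

From HB Require Import structures.
From mathcomp Require Import all_boot all_order.
Set Implicit Arguments. Unset Strict Implicit. Unset Printing Implicit Defensive.

(* Through the representation theorem, [B (nabla N Phi e)] denotes the maximal
   models of [B e] for [pre N Phi], so (ESF-D) says that maximizing for the
   society never leaves the maxima of the dictator.  For total preorders this
   holds on every set of valuations exactly when every strict preference of the
   dictator is one of the society, and two-element sets already witness the
   failure of the latter; any such set is [[B e]] for some [e], because the
   epistemic space realizes every consistent formula. *)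

Section ModelSets.

Variable P : finType.

Definition char_form (w : valuation P) : form P :=
  foldr (fun p f => FAnd (if w p then FVar p else FNeg (FVar p)) f) FTop (enum P).

Lemma eval_char_form (w v : valuation P) : eval v (char_form w) = (v == w).
Proof.
have eval_foldr s : eval v (foldr (fun p f =>
    FAnd (if w p then FVar p else FNeg (FVar p)) f) FTop s) = all (fun p => v p == w p) s.
  elim: s => [|p s IH] //=; rewrite IH.
  by case: (w p); rewrite /= ?eqb_id ?eqbF_neg.
rewrite /char_form eval_foldr; apply/allP/eqP => [vw|-> //].
by apply/ffunP => p; apply/eqP/vw; rewrite mem_enum.
Qed.

Definition set_form (A : {set valuation P}) : form P :=
  foldr (fun w f => FOr (char_form w) f) FBot (enum A).

Lemma models_set_form (A : {set valuation P}) : models (set_form A) = A.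
Proof.
apply/setP => v; rewrite inE /set_form -mem_enum.
by elim: (enum A) => [|w s IH] //=; rewrite eval_char_form IH in_cons.
Qed.

Lemma consistent_models (f : form P) : models f != set0 -> consistent f.
Proof.
case/set0Pn => w fw; rewrite /consistent /entails => /subsetP /(_ w fw).
by rewrite inE.
Qed.

Lemma epistemic_space_models (E : Type) (B : E -> form P) (A : {set valuation P}) :
  epistemic_space B -> A != set0 -> exists e, models (B e) = A.
Proof.
move=> [_ [_ realize]] A_n0.
have [|e Be] := realize (set_form A).
  by apply: consistent_models; rewrite models_set_form.
by exists e; rewrite Be models_set_form.
Qed.

End ModelSets.

Section MaximaOfTotalPreorders.

Variables (T : finType) (r r' : rel T).

Lemma maxset_subset_strict (C : {set T}) : total r' ->
    (forall x y, strict r' x y -> strict r x y) ->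
  maxset_rel C r \subset maxset_rel C r'.
Proof.
move=> tot' strict_r'r; apply/subsetP => c; rewrite !inE => /andP[cC /forall_inP c_max].
rewrite cC; apply/forall_inP => x xC; apply/negPn/negP => nc.
have /strict_r'r/andP[_ /negP] : strict r' x c.
  by rewrite /strict nc andbT; move: (tot' x c); rewrite (negbTE nc) orbF.
by apply; apply: c_max.
Qed.

Lemma strict_maxset_subset2 (w w' : T) : total r ->
    maxset_rel [set w; w'] r \subset maxset_rel [set w; w'] r' ->
  strict r' w w' -> strict r w w'.
Proof.
move=> tot /subsetP sub /andP[_ nr'w'w].
have : w' \notin maxset_rel [set w; w'] r.
  apply/negP => /sub /[!inE] /andP[_ /forall_inP w'_max].
  by move: nr'w'w; rewrite w'_max ?inE ?eqxx.
rewrite !inE eqxx orbT /= negb_forall_in => /existsP[x /andP[]].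
rewrite !inE => /orP[]/eqP-> nrw'x.
  by rewrite /strict nrw'x andbT; move: (tot w w'); rewrite (negbTE nrw'x) orbF.
by move: (tot w' w'); rewrite orbb (negbTE nrw'x).
Qed.

End MaximaOfTotalPreorders.

Section Dictatorship.

Variables (P : finType) (E : Type) (B : E -> form P).
Variables (d : Order.disp_t) (S : orderType d).
Variable nabla : seq S -> (S -> E) -> E -> E.
Variable pre : seq S -> (S -> E) -> rel (valuation P).

Hypothesis rep : represents B nabla pre.

Lemma entails_nabla_maxset N N' Phi e : society N -> society N' ->
  entails (B (nabla N Phi e)) (B (nabla N' Phi e)) =
  (maxset_rel (models (B e)) (pre N Phi) \subset maxset_rel (models (B e)) (pre N' Phi)).
Proof. by case: rep => [_ [_ rep_max]] sN sN'; rewrite /entails !rep_max. Qed.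

Lemma total_pre N Phi : society N -> total (pre N Phi).
Proof. by case: rep => [tp _] /(tp _ Phi)[]. Qed.

Lemma ESF_D_cond_ii : ESF_D B nabla -> cond_ii B nabla.
Proof. by move=> dict N /dict[dN dN_N dN_dict]; exists dN => // Phi e _. Qed.

Lemma cond_ii_cond_iii : epistemic_space B -> cond_ii B nabla -> cond_iii pre.
Proof.
move=> space dict N sN; have [dN dN_N dN_dict] := dict N sN.
exists dN => // Phi w w'.
have [|e Be] := @epistemic_space_models _ _ B [set w; w'] space.
  by apply/set0Pn; exists w; rewrite set21.
have /(dN_dict Phi) : #|models (B e)| <= 2 by rewrite Be cards2; case: (w != w').
rewrite entails_nabla_maxset // Be.
exact/strict_maxset_subset2/total_pre.
Qed.

Lemma cond_iii_ESF_D : cond_iii pre -> ESF_D B nabla.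
Proof.
move=> dict N sN; have [dN dN_N dN_dict] := dict N sN.
exists dN => // Phi e; rewrite entails_nabla_maxset //.
exact/maxset_subset_strict/dN_dict/total_pre.
Qed.

End Dictatorship.

Theorem mainTheorem13 (P : finType) (E : Type) (B : E -> form P)
  (d : Order.disp_t) (S : orderType d)
  (nabla : seq S -> (S -> E) -> E -> E)
  (pre : seq S -> (S -> E) -> rel (valuation P)) :
  epistemic_space B -> well_ordered S ->
  ES_basic_fusion B nabla -> represents B nabla pre ->
  [/\ ESF_D B nabla <-> cond_ii B nabla,
      cond_ii B nabla <-> cond_iii pre &
      cond_iii pre <-> ESF_D B nabla].
Proof.
move=> space _ _ rep.
have i_ii := @ESF_D_cond_ii _ _ B _ _ nabla.
have ii_iii := cond_ii_cond_iii rep space.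
have iii_i := cond_iii_ESF_D rep.
by split; split; auto.
Qed.
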